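(* Let $X$ be an ultrahomogeneous chain. Then, as compactifications of $X$: (1) $\beta_pX=m(X,\tau)$; (2) $\beta_\partial X=m\big((X,\tau_d)\otimes_\ell\{-1,0,1\}\big)$.
   Context: Chain: linearly ordered set; $\mathrm{Aut}(X)$: order-preserving bijections; $X$ ultrahomogeneous: for every $n$ and $x_1<\dots<x_n$, $y_1<\dots<y_n$ there is $g\in\mathrm{Aut}(X)$ with $g(x_k)=y_k$. $\tau$ is the order topology, $\tau_d$ the discrete topology. $\tau_p$ is the topology of pointwise convergence on $\mathrm{Aut}(X)$ w.r.t. $(X,\tau)$, $\tau_\partial$ the permutation topology (identity neighbourhood base: pointwise stabilizers of finite sets). $\beta_pX$ is the maximal equivariant compactification of $(X,\tau)$ for $(\mathrm{Aut}(X),\tau_p)$, i.e. the completion of $X$ with respect to the maximal totally bounded equiuniformity; $\beta_\partial X$ is the maximal equivariant compactification of $(X,\tau_d)$ for $(\mathrm{Aut}(X),\tau_\partial)$. For a linearly ordered space $Y$, $m(Y)$ denotes its smallest linearly ordered compactification, obtained by inserting one point into every gap of $Y$ (including the ends, if $Y$ has no least/greatest element) with the natural order and order topology. $(X,\tau_d)\otimes_\ell\{-1,0,1\}$ is the lexicographically ordered product with its order topology, in which $X$ is identified with the (discrete, dense) subspace $X\times\{0\}$. *)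

From HB Require Import structures.
From mathcomp Require Import all_boot all_order all_algebra.
From mathcomp Require Import all_classical topology.

Set Implicit Arguments.
Unset Strict Implicit.
Unset Printing Implicit Defensive.

Import Order.TTheory.
Local Open Scope classical_set_scope.
Local Open Scope order_scope.

(* m(Y): the smallest linearly ordered compactification of a chain Y,      *)
(* obtained by inserting one point into every gap of Y (ends included).   *)
(* A gap is a Dedekind cut (A, Y \ A), A a down-set of Y, such that A has  *)
(* no maximum and Y \ A has no minimum; A = set0 (resp. setT) is a gap     *)
(* exactly when Y has no least (resp. greatest) element.                   *)

Section MCompactification.
Context {d : Order.disp_t} (Y : orderType d).

Definition is_gap (A : set Y) : Prop :=
  [/\ (forall x y : Y, y <= x -> A x -> A y),
      (forall x, A x -> exists2 y, A y & x < y) &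
      (forall x, ~ A x -> exists2 y, ~ A y & y < x)].

Definition gap := {A : set Y | is_gap A}.

Inductive mcomp := MPt of Y | MGap of gap.

HB.instance Definition _ := gen_eqMixin mcomp.
HB.instance Definition _ := gen_choiceMixin mcomp.

Definition mcomp_le (u v : mcomp) : bool :=
  match u, v with
  | MPt x, MPt y => x <= y
  | MPt x, MGap B => `[< proj1_sig B x >]
  | MGap A, MPt y => `[< ~ proj1_sig A y >]
  | MGap A, MGap B => `[< proj1_sig A `<=` proj1_sig B >]
  end.

Lemma mcomp_le_refl : reflexive mcomp_le.
Proof. by case=> [x|A] /=; [exact: lexx | apply/asboolP]. Qed.

Lemma mcomp_le_anti : antisymmetric mcomp_le.
Proof.
case=> [x|[A hA]] [y|[B hB]] /=.
- by move=> /le_anti ->.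
- by case/andP=> /asboolP + /asboolP.
- by case/andP=> /asboolP + /asboolP.
- case/andP=> /asboolP AB /asboolP BA; congr MGap.
  apply: eq_sig_hprop => [? ? ?|/=]; first exact: Prop_irrelevance.
  by apply/seteqP; split.
Qed.

Lemma mcomp_le_trans : transitive mcomp_le.
Proof.
case=> [y|[B [dB _ _]]] [x|[A [dA _ _]]] [z|[C [dC _ _]]] /=.
- exact: le_trans.
- by move=> xy /asboolP Cy; apply/asboolP; exact: dC y x xy Cy.
- move=> /asboolP nAy yz; apply/asboolP => Az; apply: nAy.
  exact: dA z y yz Az.
- move=> /asboolP nAy /asboolP Cy; apply/asboolP => a Aa.
  apply: (dC y a) Cy; rewrite leNgt; apply/negP => ya; apply: nAy.
  by apply: dA a y (ltW ya) Aa.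
- move=> /asboolP Bx /asboolP nBz; rewrite leNgt; apply/negP => zx.
  by apply: nBz; apply: dB x z (ltW zx) Bx.
- by move=> /asboolP Bx /asboolP BC; apply/asboolP; exact: BC.
- by move=> /asboolP AB /asboolP nBz; apply/asboolP => Az; apply/nBz/AB.
- by move=> /asboolP AB /asboolP BC; apply/asboolP => a /AB /BC.
Qed.

Fact mcomp_display : Order.disp_t. Proof. exact: Order.Disp tt tt. Qed.

HB.instance Definition _ :=
  Order.Le_isPOrder.Build mcomp_display mcomp
    mcomp_le_refl mcomp_le_anti mcomp_le_trans.

Lemma mcomp_le_total : total (<=%O : rel mcomp).
Proof.
case=> [x|[A hA]] [y|[B hB]]; rewrite /Order.le /= /mcomp_le.
- exact: le_total.
- by apply/orP; case: (pselect (B x)) => h; [left|right]; apply/asboolP.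
- by apply/orP; case: (pselect (A y)) => h; [right|left]; apply/asboolP.
- case: hA hB => dA _ _ [dB _ _]; apply/orP.
  case: (pselect (A `<=` B)) => AB; [by left; apply/asboolP|right].
  apply/asboolP => b Bb.
  have [a Aa nBa] : exists2 a, A a & ~ B a.
    apply: contra_notP AB => /forall2NP nAB c Ac.
    by case: (nAB c) => // /contrapT.
  apply: dA Aa; rewrite leNgt; apply/negP => ba; apply: nBa.
  by apply: dB Bb; exact: ltW.
Qed.

HB.instance Definition _ :=
  Order.POrder_isTotal.Build mcomp_display mcomp mcomp_le_total.

End MCompactification.

Section Chains.
Context {d : Order.disp_t} (X : orderType d).

Definition is_aut (g : X -> X) : Prop := bijective g /\ {homo g : x y / x < y}.

Definition aut := {g : X -> X | is_aut g}.

Definition aut_fun (g : aut) : X -> X := proj1_sig g.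

Definition ultrahomogeneous : Prop :=
  forall s t : seq X, size s = size t -> sorted <%O s -> sorted <%O t ->
    exists g : aut, map (aut_fun g) s = t.

(* the lexicographic product X (x)_l {-1,0,1}; {-1,0,1} is 'I_3 = {0<1<2} *)
Definition lex3 := (X *l 'I_3)%type.

Definition lex3_mid (x : X) : lex3 := (x, Ordinal (isT : 1 < 3)%N).

End Chains.

(* Equivariant compactifications.  A group G acts (via ev) on a space TX;  *)
(* G carries the topology of pointwise convergence w.r.t. the topology of  *)
(* TX, i.e. the initial topology of the evaluations g |-> ev g x.  This   *)
(* gives tau_p for TX = (X, tau) and tau_partial for TX = (X, tau_d).      *)

Section Equivariant.
Context (TX : topologicalType) (G : Type) (ev : G -> TX -> TX).

(* act is an action of the group G = {ev g} (composition, identity) *)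
Definition is_action (K : Type) (act : G -> K -> K) : Prop :=
  (forall g, ev g = id -> forall z, act g z = z) /\
  (forall f g h, ev f = ev g \o ev h -> forall z, act f z = act g (act h z)).

(* joint continuity of act : G x K -> K, where the basic neighbourhoods of
   g in G are {h | forall x in F, ev h x \in U x}, F finite, U x open
   neighbourhoods of ev g x *)
Definition pointwise_jcont (K : topologicalType) (act : G -> K -> K) : Prop :=
  forall (g : G) (k : K) (W : set K), open W -> W (act g k) ->
    exists (F : seq TX) (U : TX -> set TX) (V : set K),
      [/\ (forall x, x \in F -> open (U x) /\ U x (ev g x)),
          open V, V k &
          forall (h : G) (k' : K), (forall x, x \in F -> U x (ev h x)) ->
            V k' -> W (act h k')].

Definition Gspace (K : topologicalType) (act : G -> K -> K) : Prop :=
  is_action act /\ pointwise_jcont act.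

Definition equivariant (K : Type) (act : G -> K -> K) (nu : TX -> K) : Prop :=
  forall g x, nu (ev g x) = act g (nu x).

Definition topological_embedding (S T : topologicalType) (f : S -> T) : Prop :=
  [/\ injective f, continuous f &
      forall U : set S, open U -> exists2 V : set T, open V & f @^-1` V = U].

Definition max_equiv_compactification (L : topologicalType) (iota : TX -> L)
  : Prop :=
  exists actL : G -> L -> L,
    [/\ Gspace actL, compact [set: L] /\ hausdorff_space L,
        topological_embedding iota /\ dense (range iota),
        equivariant actL iota &
        forall (K : topologicalType) (actK : G -> K -> K) (nu : TX -> K),
          compact [set: K] -> hausdorff_space K -> Gspace actK ->
          continuous nu -> equivariant actK nu ->
          exists f : L -> K,
            [/\ continuous f, forall x, f (iota x) = nu x &
                forall g z, f (actL g z) = actK g (f z)]].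

End Equivariant.

From HB Require Import structures.
From mathcomp Require Import all_boot all_order all_algebra.
From mathcomp Require Import all_classical topology.

(* For every chain [Y], filling the gaps gives a compact linearly ordered space
   [m(Y)], and automorphisms of [X] extend to gaps.  The extended action of
   [Aut(X)] on [m(X)], resp. on [m(X (x)_l {-1,0,1})], is jointly continuous for
   [tau_p], resp. [tau_partial], since an open ray around [g k] is controlled by
   the image under [g] of a single point of [X].  Maximality comes from
   homogeneity at the added points: a gap [u] and a finite [F] in [X] admit a
   neighbourhood of [u] whose points of [X] all lie in one cut of [F], so by
   ultrahomogeneity any two of them are exchanged by an automorphism fixing [F].
   For an equivariant map [nu] into a compact [G]-space, joint continuity at
   [(1, p)] then turns every cluster point [p] of [nu] at [u] into its limit; the
   resulting extension is continuous by regularity of the target and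
   equivariant by density. *)

Set Implicit Arguments.
Unset Strict Implicit.
Unset Printing Implicit Defensive.

Import Order.TTheory.
Local Open Scope classical_set_scope.
Local Open Scope order_scope.

Section JointNeighbourhoods.
Context (TX : topologicalType) (G : Type) (ev : G -> TX -> TX)
  (K : topologicalType) (act : G -> K -> K).

Definition joint_nbhs (g : G) (k : K) (P : set K) :=
  exists (F : seq TX) (U : TX -> set TX) (V : set K),
    [/\ (forall x, x \in F -> open (U x) /\ U x (ev g x)),
        open V, V k &
        forall (h : G) (k' : K), (forall x, x \in F -> U x (ev h x)) ->
          V k' -> P (act h k')].

Lemma joint_nbhsT g k : joint_nbhs g k setT.
Proof. by exists [::], (fun=> setT), setT; split => //; exact: openT. Qed.

Lemma joint_nbhsS g k (P Q : set K) : P `<=` Q -> joint_nbhs g k P -> joint_nbhs g k Q.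
Proof.
move=> PQ [F [U [V [FU oV Vk FVP]]]]; exists F, U, V; split => // h k' hU Vk'.
exact/PQ/FVP.
Qed.

Lemma joint_nbhsI g k (P Q : set K) :
  joint_nbhs g k P -> joint_nbhs g k Q -> joint_nbhs g k (P `&` Q).
Proof.
move=> [F1 [U1 [V1 [FU1 oV1 V1k FVP]]]] [F2 [U2 [V2 [FU2 oV2 V2k FVQ]]]].
pose restr (F : seq TX) (U : TX -> set TX) x := if x \in F then U x else setT.
have restrP (F : seq TX) U x : (forall y, y \in F -> open (U y) /\ U y (ev g y)) ->
    open (restr F U x) /\ restr F U x (ev g x).
  by rewrite /restr; case: ifP => [xF /(_ x xF)//|_ _]; split => //; exact: openT.
exists (F1 ++ F2), (fun x => restr F1 U1 x `&` restr F2 U2 x), (V1 `&` V2).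
split=> [x _||//|].
- have [o1 u1] := restrP F1 U1 x FU1; have [o2 u2] := restrP F2 U2 x FU2.
  by split; [exact: openI|].
- exact: openI.
move=> h k' hU [V1k' V2k']; split; [apply: FVP | apply: FVQ] => // x xF.
  by have [] := hU x; rewrite ?mem_cat ?xF // /restr xF.
by have [] := hU x; rewrite ?mem_cat ?xF ?orbT // /restr xF.
Qed.

Lemma pointwise_jcont_continuous g : pointwise_jcont ev act -> continuous (act g).
Proof.
move=> jc k W /=; rewrite !nbhsE => -[W0 [oW0 W0k] W0W].
have [F [U [V [FU oV Vk FVW]]]] := jc g k W0 oW0 W0k.
exists V => // k' Vk'; by apply/W0W/FVW => // y /FU [].
Qed.

End JointNeighbourhoods.

Section DenseExtension.
Context (TX : topologicalType) (G : Type) (ev : G -> TX -> TX)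
  (L : topologicalType) (iota : TX -> L).

Definition trace_nbhs (u : L) : set_system TX :=
  filter_from [set O : set L | open O /\ O u] (fun O => iota @^-1` O).

Definition homogeneous_at (u : L) : Prop :=
  forall F : seq TX, exists2 O : set L, open O /\ O u &
    forall x x', O (iota x) -> O (iota x') ->
      exists h : G, (forall y, y \in F -> ev h y = y) /\ ev h x = x'.

Hypothesis iota_dense : dense (range iota).

Lemma trace_nbhs_proper u : ProperFilter (trace_nbhs u).
Proof.
apply: filter_from_proper; last first.
  move=> O [oO Ou]; have [|z [Oz [x _ xz]]] := iota_dense (O := O) _ oO.
    by exists u.
  by exists x; rewrite /= xz.
apply: filter_from_filter; first by exists setT; split => //; exact: openT.
by move=> O1 O2 [oO1 O1u] [oO2 O2u]; exists (O1 `&` O2) => //; split; [exact: openI|].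
Qed.

Lemma dense_continuous_eq (K : topologicalType) (phi psi : L -> K) :
  hausdorff_space K -> continuous phi -> continuous psi ->
  (forall x, phi (iota x) = psi (iota x)) -> phi = psi.
Proof.
move=> K_T2 phi_cont psi_cont phi_psi; apply/funext => z; apply: K_T2 => A B A_phi B_psi.
have := phi_cont z A A_phi; have := psi_cont z B B_psi.
rewrite !nbhsE => -[O2 [oO2 O2z] O2B] [O1 [oO1 O1z] O1A].
have [|w [[O1w O2w] [x _ xw]]] := iota_dense (O := O1 `&` O2) _ (openI oO1 oO2).
  by exists z.
by exists (phi w); split; [exact: O1A | rewrite -xw phi_psi; apply: O2B; rewrite xw].
Qed.

Lemma cvg_trace_nbhs_image (K : topologicalType) (nu : TX -> K) x :
  topological_embedding iota -> continuous nu -> nu @ trace_nbhs (iota x) --> nu x.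
Proof.
move=> [_ _ iota_open] nu_cont W /= /nu_cont; rewrite nbhsE => -[B [oB Bx] BW].
have [V oV VB] := iota_open B oB.
exists V; first by split => //; rewrite -VB in Bx.
by move=> y Vy; apply: BW; rewrite -VB.
Qed.

(* A cluster point [p] of [nu] at [u] is a limit: near [(1, p)] the action maps
   [nu x] into any neighbourhood of [p], and homogeneity moves [x] anywhere near [u]. *)
Lemma cvg_trace_nbhs_homogeneous (K : topologicalType) (actK : G -> K -> K)
    (nu : TX -> K) (e : G) u :
  ev e = id -> compact [set: K] -> Gspace ev actK -> equivariant ev actK nu ->
  homogeneous_at u -> exists p : K, nu @ trace_nbhs u --> p.
Proof.
move=> ev_e K_compact [[act_e _] jc] nu_equiv u_hom.
have trace_proper := trace_nbhs_proper u.
have [p [_ p_cluster]] := K_compact (nu @ trace_nbhs u) _ filterT.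
exists p => W /=; rewrite nbhsE => -[W0 [oW0 W0p] W0W].
have [F [U [V [FU oV Vp FVW]]]] : joint_nbhs ev actK e p W0.
  by apply: jc => //; rewrite act_e.
have [O [oO Ou] O_hom] := u_hom F.
have [_ [[x Ox <-] Vnux]] : (nu @` (iota @^-1` O)) `&` V !=set0.
  apply: p_cluster; last exact: open_nbhs_nbhs.
  by exists O => // y Oy; exists y.
exists O => // x' Ox'; have [h [hF <-]] := O_hom x x' Ox Ox'.
apply/W0W; rewrite /= nu_equiv; apply: FVW => // y yF.
by rewrite hF //; have [_] := FU y yF; rewrite ev_e.
Qed.

Lemma continuous_of_cvg_trace_nbhs (K : topologicalType) (nu : TX -> K) (f : L -> K) :
  compact [set: K] -> hausdorff_space K ->
  (forall u, nu @ trace_nbhs u --> f u) -> continuous f.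
Proof.
move=> K_compact K_T2 f_lim u W /= Wfu.
have [C C_fu CW] := compact_regular K_T2 K_compact filterT Wfu.
have [O [oO Ou] OC] := f_lim u C C_fu.
rewrite nbhsE; exists O => // v Ov; apply: CW => B B_fv.
have [O' [oO' O'v] O'B] := f_lim v B B_fv.
have [|w [[Ow O'w] [x _ xw]]] := iota_dense (O := O `&` O') _ (openI oO oO').
  by exists v.
by exists (nu x); split; [apply: OC | apply: O'B]; rewrite /= xw.
Qed.

Theorem max_equiv_compactification_homogeneous (actL : G -> L -> L) (e : G) :
  ev e = id -> Gspace ev actL -> compact [set: L] -> hausdorff_space L ->
  topological_embedding iota -> equivariant ev actL iota ->
  (forall u, ~ range iota u -> homogeneous_at u) ->
  max_equiv_compactification ev iota.
Proof.
move=> ev_e actL_Gspace L_compact L_T2 iota_emb iota_equiv hom.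
exists actL; split => // K actK nu K_compact K_T2 actK_Gspace nu_cont nu_equiv.
have lim u : exists p : K, nu @ trace_nbhs u --> p.
  have [[x _ <-]|u_out] := pselect (range iota u).
    by exists (nu x); exact: cvg_trace_nbhs_image.
  exact: (cvg_trace_nbhs_homogeneous ev_e K_compact actK_Gspace nu_equiv (hom u u_out)).
have [f f_lim] := choice lim.
have f_iota x : f (iota x) = nu x.
  have trace_proper := trace_nbhs_proper (iota x).
  apply: (@cvg_unique K K_T2 (nu @ trace_nbhs (iota x)) _ (f (iota x)) (nu x)).
    exact: f_lim.
  exact: cvg_trace_nbhs_image.
have f_cont := continuous_of_cvg_trace_nbhs K_compact K_T2 f_lim.
exists f; split => // g z.
have actL_cont : continuous (actL g) := pointwise_jcont_continuous actL_Gspace.2.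
have actK_cont : continuous (actK g) := pointwise_jcont_continuous actK_Gspace.2.
suff /(congr1 (@^~ z)) : f \o actL g = actK g \o f by [].
apply: (dense_continuous_eq K_T2) => [w|w|x] /=.
- exact: continuous_comp (actL_cont w) (f_cont _).
- exact: continuous_comp (f_cont w) (actK_cont _).
- by rewrite -iota_equiv !f_iota nu_equiv.
Qed.

End DenseExtension.

Section OrderNeighbourhoods.
Context {d : Order.disp_t} {T : orderTopologicalType d}.

Definition lbound_nbhs (u : T) (lo : set T) :=
  lo = setT \/ exists2 a, a < u & lo = `]a, +oo[%classic.

Definition ubound_nbhs (u : T) (hi : set T) :=
  hi = setT \/ exists2 b, u < b & hi = `]-oo, b[%classic.

Lemma nbhs_bound_rays (u : T) (W : set T) : nbhs u W ->
  exists lo hi, [/\ lbound_nbhs u lo, ubound_nbhs u hi & lo `&` hi `<=` W].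
Proof.
rewrite itv_nbhsE => -[[l r] [oi ui] iW].
have [lo [u_lo lo_l]] : exists lo, lbound_nbhs u lo /\ forall x, lo x -> (l <= BLeft x)%O.
  case: l oi ui {iW} => [[] a|[]] oi ui.
  - by move: (itv_open_ends_lside oi).
  - exists `]a, +oo[%classic; split; last by move=> x; rewrite /= in_itv /= andbT.
    by right; exists a => //; move: ui; rewrite in_itv /= => /andP[].
  - by exists setT; split; [left|].
  - by move: (itv_open_ends_linfty oi).
have [hi [u_hi hi_r]] : exists hi, ubound_nbhs u hi /\ forall x, hi x -> (BRight x <= r)%O.
  case: r oi ui {iW lo_l u_lo} => [[] b|[]] oi ui.
  - exists `]-oo, b[%classic; split; last by move=> x; rewrite /= in_itv.
    by right; exists b => //; move: ui; rewrite in_itv /= => /andP[].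
  - by move: (itv_open_ends_rside oi).
  - by move: (itv_open_ends_rinfty oi).
  - by exists setT; split; [left|].
exists lo, hi; split => // x [/lo_l lx /hi_r xr]; apply: iW => /=.
by rewrite itv_boundlr lx xr.
Qed.

Lemma cvg_rays (F : set_system T) (c : T) : Filter F ->
  (forall a, a < c -> F `]a, +oo[%classic) ->
  (forall b, c < b -> F `]-oo, b[%classic) -> F --> c.
Proof.
move=> FF F_lo F_hi W /nbhs_bound_rays [lo [hi [c_lo c_hi sub]]].
apply: filterS sub _; apply: filterI.
  by case: c_lo => [->|[a ac ->]]; [exact: filterT | exact: F_lo].
by case: c_hi => [->|[b cb ->]]; [exact: filterT | exact: F_hi].
Qed.

Lemma pointwise_jcont_rays (TX : topologicalType) (G : Type) (ev : G -> TX -> TX)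
    (act : G -> T -> T) :
  (forall g k a, a < act g k -> joint_nbhs ev act g k `]a, +oo[%classic) ->
  (forall g k b, act g k < b -> joint_nbhs ev act g k `]-oo, b[%classic) ->
  pointwise_jcont ev act.
Proof.
move=> jc_lo jc_hi g k W oW Wgk.
have /nbhs_bound_rays [lo [hi [gk_lo gk_hi sub]]] := open_nbhs_nbhs (conj oW Wgk).
apply: joint_nbhsS sub _; apply: joint_nbhsI.
  by case: gk_lo => [->|[a ac ->]]; [exact: joint_nbhsT | exact: jc_lo].
by case: gk_hi => [->|[b cb ->]]; [exact: joint_nbhsT | exact: jc_hi].
Qed.

End OrderNeighbourhoods.

Section MCompactificationOrder.
Context {d : Order.disp_t} (Y : orderType d).
Local Notation M := (mcomp Y).

Lemma lePP (x y : Y) : (MPt x <= MPt y :> M) = (x <= y).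
Proof. by []. Qed.

Lemma lePG (x : Y) (B : gap Y) : (MPt x <= MGap B :> M) <-> sval B x.
Proof. by rewrite /Order.le /=; split => /asboolP. Qed.

Lemma leGP (A : gap Y) (y : Y) : (MGap A <= MPt y :> M) <-> ~ sval A y.
Proof. by rewrite /Order.le /=; split => /asboolP. Qed.

Lemma leGG (A B : gap Y) : (MGap A <= MGap B :> M) <-> sval A `<=` sval B.
Proof. by rewrite /Order.le /=; split => /asboolP. Qed.

Lemma ltPP (x y : Y) : (MPt x < MPt y :> M) = (x < y).
Proof. by rewrite !ltNge lePP. Qed.

Lemma ltPG (x : Y) (B : gap Y) : (MPt x < MGap B :> M) <-> sval B x.
Proof.
rewrite ltNge; split => [/negP nBx|Bx]; last by apply/negP => /leGP.
by apply: contrapT => /leGP.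
Qed.

Lemma ltGP (A : gap Y) (y : Y) : (MGap A < MPt y :> M) <-> ~ sval A y.
Proof.
rewrite ltNge; split => [/negP nAy|nAy]; last by apply/negP => /lePG.
by move=> Ay; apply/nAy/lePG.
Qed.

Lemma ltGG (A B : gap Y) :
  (MGap A < MGap B :> M) <-> exists2 y, sval B y & ~ sval A y.
Proof.
rewrite ltNge; split => [/negP nBA|[y By nAy]]; last by apply/negP => /leGG /(_ y By).
apply: contrapT => /forall2NP BA; apply/nBA/leGG => y By.
by case: (BA y) => // /contrapT.
Qed.

Lemma MGap_eq (A B : gap Y) : sval A = sval B -> MGap A = MGap B.
Proof.
by move=> AB; congr MGap; apply: eq_sig_hprop => // ? ? ?; exact: Prop_irrelevance.
Qed.

Lemma exists_pt_lt_gap (A : gap Y) (a : M) :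
  a < MGap A -> exists2 y, sval A y & a < MPt y.
Proof.
case: A => A [A_down A_nomax CA_nomin]; case: a => [w|C].
  by move/ltPG => /= /A_nomax [y Ay wy]; exists y; rewrite ?ltPP.
by move/ltGG => /= [y Ay nCy]; exists y => //; apply/ltGP.
Qed.

Lemma exists_pt_gap_lt (A : gap Y) (b : M) :
  MGap A < b -> exists2 y, ~ sval A y & MPt y < b.
Proof.
case: A => A [A_down A_nomax CA_nomin]; case: b => [w|C].
  by move/ltGP => /= /CA_nomin [y nAy yw]; exists y; rewrite ?ltPP.
by move/ltGG => /= [y Cy nAy]; exists y => //; apply/ltPG.
Qed.

Lemma exists_pt_le_lt (a v : M) : a < v -> exists p : Y, a <= MPt p /\ MPt p < v.
Proof.
case: v => [x|B]; last first.
  by move/exists_pt_lt_gap => [y By ay]; exists y; split; [exact: ltW | exact/ltPG].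
case: a => [w|C] av; first by exists w.
by have [z nCz zx] := exists_pt_gap_lt av; exists z; split => //; exact/leGP.
Qed.

Lemma exists_pt_lt_le (v b : M) : v < b -> exists p : Y, v < MPt p /\ MPt p <= b.
Proof.
case: v => [x|B].
  case: b => [w|C] vb; first by exists w.
  by have [y Cy xy] := exists_pt_lt_gap vb; exists y; split => //; exact/ltW/ltPG.
case: b => [w|C] vb; first by exists w.
have [y nBy yC] := exists_pt_gap_lt vb; have [z Cz yz] := exists_pt_lt_gap yC.
exists z; split; last exact/ltW/ltPG.
apply/ltGP => Bz; apply: nBy; case: B {vb yC} Bz => B [B_down _ _] /= Bz.
by apply: B_down Bz; rewrite -lePP; exact: ltW.
Qed.

Lemma exists_mcomp_cut (D : set Y) : (forall x y, y <= x -> D x -> D y) ->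
  exists c : M, (forall a, a < c -> exists2 y, D y & a < MPt y) /\
                (forall b, c < b -> exists2 z, ~ D z & MPt z <= b).
Proof.
move=> D_down.
have [[y0 Dy0 y0_max]|D_nomax] :=
  pselect (exists2 y0, D y0 & forall y, D y -> y <= y0).
  exists (MPt y0); split=> [a ay0|b y0b]; first by exists y0.
  have [p [y0p pb]] := exists_pt_lt_le y0b; exists p => // Dp.
  by move: y0p; rewrite ltPP ltNge y0_max.
have {}D_nomax x : D x -> exists2 y, D y & x < y.
  move=> Dx; apply: contrapT => x_max; apply: D_nomax; exists x => // y Dy.
  by rewrite leNgt; apply/negP => xy; apply: x_max; exists y.
have [[z0 nDz0 z0_min]|CD_nomin] :=
  pselect (exists2 z0, ~ D z0 & forall z, ~ D z -> z0 <= z).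
  exists (MPt z0); split=> [a az0|b z0b]; last by exists z0 => //; exact: ltW.
  have [p [ap pz0]] := exists_pt_le_lt az0; rewrite ltPP in pz0.
  have Dp : D p by apply: contrapT => /z0_min; rewrite leNgt pz0.
  by have [y Dy py] := D_nomax p Dp; exists y; rewrite // (le_lt_trans ap) ?ltPP.
have {}CD_nomin x : ~ D x -> exists2 y, ~ D y & y < x.
  move=> nDx; apply: contrapT => x_min; apply: CD_nomin; exists x => // y nDy.
  by rewrite leNgt; apply/negP => yx; apply: x_min; exists y.
exists (MGap (exist _ D (And3 D_down D_nomax CD_nomin))); split.
  by move=> a /exists_pt_lt_gap.
by move=> b /exists_pt_gap_lt [z nDz zb]; exists z => //; exact: ltW.
Qed.

Lemma mcomp_compact : compact [set: order_topology M].
Proof.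
rewrite compact_ultra => F F_ultra _.
pose D := [set y : Y | F [set v : order_topology M | MPt y <= v]].
have D_down x y : y <= x -> D x -> D y.
  by move=> yx; apply: filterS => v /=; apply: le_trans; rewrite lePP.
have [c [c_lo c_hi]] := exists_mcomp_cut D_down.
exists c; split => //; apply: cvg_rays => [a /c_lo [y Dy ay]|b /c_hi [z nDz zb]].
  by apply: filterS Dy => v /= yv; rewrite in_itv /= andbT (lt_le_trans ay).
have [//|F_lt_z] := in_ultra_setVsetC [set v : order_topology M | MPt z <= v] F_ultra.
apply: filterS F_lt_z => v /= /negP; rewrite -ltNge in_itv /= => vz.
exact: lt_le_trans vz zb.
Qed.

End MCompactificationOrder.

Section MCompactificationTopology.
Context {d : Order.disp_t} (Y : orderType d).
Local Notation M := (order_topology (mcomp Y)).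

Lemma bound_nbhs_meet_pts (y0 : Y) (u : M) lo hi :
  lbound_nbhs u lo -> ubound_nbhs u hi -> exists y, lo (MPt y) /\ hi (MPt y).
Proof.
case: u => [x|A] u_lo u_hi.
  exists x; split; [case: u_lo => [->|[a ? ->]] | case: u_hi => [->|[b ? ->]]] => //=;
  by rewrite in_itv /= ?andbT.
case: u_lo => [->|[a aA ->]].
  case: u_hi => [->|[b Ab ->]]; first by exists y0.
  by have [y _ yb] := exists_pt_gap_lt Ab; exists y; rewrite /= in_itv.
have [y Ay ay] := exists_pt_lt_gap aA; exists y; split; first by rewrite /= in_itv /= ay.
case: u_hi => [->|[b Ab ->]] //=; rewrite in_itv /=.
by apply: lt_trans Ab; apply/ltPG.
Qed.

Lemma dense_MPt (y0 : Y) : dense (range (@MPt _ Y : order_topology Y -> M)).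
Proof.
move=> O [u Ou] oO.
have /nbhs_bound_rays [lo [hi [u_lo u_hi sub]]] := open_nbhs_nbhs (conj oO Ou).
have [y [lo_y hi_y]] := bound_nbhs_meet_pts y0 u_lo u_hi.
by exists (MPt y); split; [exact: sub | exists y].
Qed.

Lemma MPt_continuous : continuous (@MPt _ Y : order_topology Y -> M).
Proof.
move=> x W /nbhs_bound_rays [lo [hi [x_lo x_hi sub]]].
suff : nbhs (x : order_topology Y) (@MPt _ Y @^-1` (lo `&` hi)).
  by apply: filterS => z /sub.
apply: filterI.
  case: x_lo => [->|[a ax ->]]; first exact: filterT.
  have [p [ap px]] := exists_pt_le_lt ax; rewrite ltPP in px.
  have : nbhs (x : order_topology Y) `]p, +oo[%classic by apply: open_nbhs_nbhs; split;
    [exact: rray_open | rewrite /= in_itv /= px].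
  apply: filterS => z /=; rewrite !in_itv /= !andbT => pz.
  by rewrite (le_lt_trans ap) ?ltPP.
case: x_hi => [->|[b xb ->]]; first exact: filterT.
have [p [xp pb]] := exists_pt_lt_le xb; rewrite ltPP in xp.
have : nbhs (x : order_topology Y) `]-oo, p[%classic by apply: open_nbhs_nbhs; split;
  [exact: lray_open | rewrite /= in_itv /= xp].
apply: filterS => z /=; rewrite !in_itv /= => zp.
by rewrite (lt_le_trans _ pb) ?ltPP.
Qed.

Lemma MPt_open_preimage (U : set (order_topology Y)) : open U ->
  exists2 V : set M, open V & @MPt _ Y @^-1` V = U.
Proof.
move=> oU; exists (\bigcup_(W in [set W : set M | open W /\ @MPt _ Y @^-1` W `<=` U]) W).
  by apply: bigcup_open => W [].
apply/seteqP; split=> [x [W [_ WU] Wx]|x Ux]; first exact: WU.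
have /nbhs_bound_rays [lo [hi [x_lo x_hi sub]]] := open_nbhs_nbhs (conj oU Ux).
have [lo' [olo' lo'x lo'_lo]] : exists lo' : set M,
    [/\ open lo', lo' (MPt x) & @MPt _ Y @^-1` lo' `<=` lo].
  case: x_lo => [->|[a ax ->]]; first by exists setT; split => //; exact: openT.
  exists (`]@MPt _ Y a, +oo[%classic : set M); split; first exact: rray_open.
    by rewrite /= in_itv /= ltPP andbT.
  by move=> z /=; rewrite !in_itv /= !andbT ltPP.
have [hi' [ohi' hi'x hi'_hi]] : exists hi' : set M,
    [/\ open hi', hi' (MPt x) & @MPt _ Y @^-1` hi' `<=` hi].
  case: x_hi => [->|[b xb ->]]; first by exists setT; split => //; exact: openT.
  exists (`]-oo, @MPt _ Y b[%classic : set M); split; first exact: lray_open.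
    by rewrite /= in_itv /= ltPP.
  by move=> z /=; rewrite !in_itv /= ltPP.
exists (lo' `&` hi') => //; split; first exact: openI.
by move=> z [/lo'_lo ? /hi'_hi ?]; apply: sub.
Qed.

Lemma MPt_embedding : topological_embedding (@MPt _ Y : order_topology Y -> M).
Proof.
by split; [move=> x y [] | exact: MPt_continuous | exact: MPt_open_preimage].
Qed.

End MCompactificationTopology.

Lemma exists_nbhs_same_cut {d1 d2 : Order.disp_t} (X : orderType d1) (Y : orderType d2)
    (j : X -> Y) (u : order_topology (mcomp Y)) (F : seq X) :
  {homo j : x y / x < y} -> (forall x, MPt (j x) <> u) ->
  exists2 O : set (order_topology (mcomp Y)), open O /\ O u &
    forall x x', O (MPt (j x)) -> O (MPt (j x')) ->
      forall f, f \in F -> [/\ (f < x) = (f < x'), f != x & f != x'].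
Proof.
move=> j_homo u_out; have j_lt := leW_mono (le_mono j_homo).
elim: F => [|f F [O [oO Ou] O_cut]]; first by exists setT => //; split => //; exact: openT.
pose R : set (order_topology (mcomp Y)) :=
  if MPt (j f) < u then `]MPt (j f), +oo[%classic else `]-oo, MPt (j f)[%classic.
have R_side x : R (MPt (j x)) -> (f < x) = (MPt (j f) < u) /\ f != x.
  rewrite /R; case: ifP => fu; rewrite /= in_itv /= ?andbT ltPP j_lt => fx.
    by rewrite fx lt_eqF.
  by rewrite lt_gtF // gt_eqF.
exists (R `&` O).
  split; first by apply: openI => //; rewrite /R; case: ifP => _;
    [exact: rray_open | exact: lray_open].
  split => //; rewrite /R; case: ifP => fu; first by rewrite /= in_itv /= fu.
  rewrite /= in_itv /= lt_neqAle; move: fu; rewrite ltNge => /negbFE ->.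
  by rewrite andbT; apply/eqP => fu; apply: (u_out f).
move=> x x' [Rx Ox] [Rx' Ox'] g; rewrite inE => /predU1P[->|gF]; last exact: O_cut.
by have [-> ->] := R_side x Rx; have [-> ->] := R_side x' Rx'.
Qed.

Section Automorphism.
Context {d : Order.disp_t} (Y : orderType d) (f : Y -> Y).
Hypothesis f_aut : is_aut f.

Lemma aut_le_mono : {mono f : x y / x <= y}.
Proof. exact: le_mono f_aut.2. Qed.

Lemma aut_lt_mono : {mono f : x y / x < y}.
Proof. exact: leW_mono aut_le_mono. Qed.

Lemma aut_inj : injective f.
Proof. exact: bij_inj f_aut.1. Qed.

Lemma aut_surj y : exists x, f x = y.
Proof. by have [g _ fg] := f_aut.1; exists (g y). Qed.

Lemma is_gap_image (A : set Y) : is_gap A -> is_gap (f @` A).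
Proof.
move=> [A_down A_nomax CA_nomin]; split.
- move=> x y yx [a Aa fax]; have [z fzy] := aut_surj y; subst x y.
  by exists z => //; apply: A_down Aa; rewrite -aut_le_mono.
- move=> _ [a Aa <-]; have [b Ab ab] := A_nomax a Aa.
  by exists (f b); [exists b | rewrite aut_lt_mono].
- move=> y nAy; have [z zy] := aut_surj y; subst y.
  have nAz : ~ A z by move=> Az; apply: nAy; exists z.
  have [w nAw wz] := CA_nomin z nAz; exists (f w); last by rewrite aut_lt_mono.
  by move=> [a Aa /aut_inj aw]; apply: nAw; rewrite -aw.
Qed.

Definition mcomp_map (u : mcomp Y) : mcomp Y :=
  match u with
  | MPt y => MPt (f y)
  | MGap A => MGap (exist _ (f @` sval A) (is_gap_image (svalP A)))
  end.

Lemma mcomp_map_homo_le : {homo mcomp_map : u v / u <= v}.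
Proof.
case=> [x|A] [y|B] /=.
- by rewrite !lePP aut_le_mono.
- by move/lePG => Bx; apply/lePG; exists x.
- by move/leGP => nAy; apply/leGP => -[a Aa /aut_inj ay]; apply: nAy; rewrite -ay.
- by move/leGG => AB; apply/leGG => _ [a Aa <-]; exists a => //; apply: AB.
Qed.

Lemma mcomp_map_inj : injective mcomp_map.
Proof.
case=> [x|A] [y|B] //= []; first by move/aut_inj ->.
move=> AB; apply: MGap_eq; apply/seteqP; split => z Az.
  have : (f @` sval B) (f z) by rewrite -AB; exists z.
  by case=> b Bb /aut_inj <-.
have : (f @` sval A) (f z) by rewrite AB; exists z.
by case=> a Aa /aut_inj <-.
Qed.

Lemma mcomp_map_lt_mono : {mono mcomp_map : u v / u < v}.
Proof. exact: leW_mono (le_mono (inj_homo_lt mcomp_map_inj mcomp_map_homo_le)). Qed.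

End Automorphism.

Lemma is_action_mcomp_map (TX : topologicalType) (G : Type) (ev : G -> TX -> TX)
    {d : Order.disp_t} (Y : orderType d) (phi : G -> Y -> Y)
    (phi_aut : forall g, is_aut (phi g)) :
  (forall g, ev g = id -> phi g =1 id) ->
  (forall f g h, ev f = ev g \o ev h -> phi f =1 phi g \o phi h) ->
  is_action ev (fun g => mcomp_map (phi_aut g)).
Proof.
move=> phi_id phi_comp; split=> [g /phi_id gid|f g h /phi_comp fgh] [y|A] /=.
- by rewrite gid.
- by apply: MGap_eq; rewrite /= (eq_imagel (f' := id)) ?image_id.
- by rewrite fgh.
- by apply: MGap_eq; rewrite /= (eq_imagel (f' := phi g \o phi h)) ?image_comp.
Qed.

Section UltrahomogeneousChain.
Context {d : Order.disp_t} (X : orderType d).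
Hypothesis X_uh : ultrahomogeneous X.
Hypothesis X_nontrivial : exists x y : X, x < y.

Lemma ultrahomogeneous_nomax (z : X) : exists w, z < w.
Proof.
have [x [y xy]] := X_nontrivial.
have [g /= [<-]] := X_uh (s := [:: x]) (t := [:: z]) erefl erefl erefl.
by exists (aut_fun g y); rewrite (aut_lt_mono (svalP g)).
Qed.

Lemma ultrahomogeneous_nomin (z : X) : exists w, w < z.
Proof.
have [x [y xy]] := X_nontrivial.
have [g /= [<-]] := X_uh (s := [:: y]) (t := [:: z]) erefl erefl erefl.
by exists (aut_fun g x); rewrite (aut_lt_mono (svalP g)).
Qed.

Lemma ultrahomogeneous_dense (p q : X) : p < q -> exists2 r, p < r & r < q.
Proof.
move=> pq; have [x [y xy]] := X_nontrivial; have [w yw] := ultrahomogeneous_nomax y.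
have xw_sorted : sorted <%O [:: x; w] by rewrite /= andbT (lt_trans xy yw).
have pq_sorted : sorted <%O [:: p; q] by rewrite /= andbT pq.
have [g /= [<- <-]] := X_uh (s := [:: x; w]) (t := [:: p; q]) erefl xw_sorted pq_sorted.
by exists (aut_fun g y); rewrite (aut_lt_mono (svalP g)).
Qed.

Lemma is_aut_id : is_aut (@id X).
Proof. by split; [exists id | move=> x y]. Qed.

Definition aut_id : aut X := exist _ id is_aut_id.

(* Ultrahomogeneity applied to the sorted [x :: F] and its image under [x |-> x']. *)
Lemma ultrahomogeneous_move (F : seq X) (x x' : X) :
  (forall f, f \in F -> [/\ (f < x) = (f < x'), f != x & f != x']) ->
  exists h : aut X, (forall f, f \in F -> aut_fun h f = f) /\ aut_fun h x = x'.
Proof.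
move=> F_cut.
pose sg z := if z == x then x' else z.
pose s := sort <=%O (undup (x :: F)).
have s_sorted : sorted <%O s by rewrite sort_lt_sorted undup_uniq.
have mem_s z : (z \in s) = (z \in x :: F) by rewrite mem_sort mem_undup.
have sg_s_sorted : sorted <%O (map sg s).
  apply: (@homo_sorted_in _ _ (mem (x :: F)) sg) s_sorted; last by apply/allP => z; rewrite mem_s.
  move=> a b; rewrite !inE /sg => /predU1P[->|aF] /predU1P[->|bF] ab.
  - by rewrite ltxx in ab.
  - have [xb_x'b bx bx'] := F_cut b bF; rewrite eqxx (negbTE bx).
    case/orP: (lt_total bx') => // b_x'; rewrite -xb_x'b in b_x'.
    by have := lt_trans b_x' ab; rewrite ltxx.
  - by have [ax_ax' ax _] := F_cut a aF; rewrite (negbTE ax) eqxx -ax_ax'.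
  - have [_ ax _] := F_cut a aF; have [_ bx _] := F_cut b bF.
    by rewrite (negbTE ax) (negbTE bx).
have [h /eq_in_map h_sg] := X_uh (esym (size_map sg s)) s_sorted sg_s_sorted.
exists h; split; last by rewrite h_sg ?mem_s ?mem_head // /sg eqxx.
move=> f fF; rewrite h_sg ?mem_s ?inE ?fF ?orbT //.
by have [_ fx _] := F_cut f fF; rewrite /sg (negbTE fx).
Qed.

Lemma ultrahomogeneous_mcomp_nbhs {d' : Order.disp_t} (Y : orderType d') (j : X -> Y)
    (u : order_topology (mcomp Y)) (F : seq X) :
  {homo j : x y / x < y} -> (forall x, MPt (j x) <> u) ->
  exists2 O : set (order_topology (mcomp Y)), open O /\ O u &
    forall x x', O (MPt (j x)) -> O (MPt (j x')) ->
      exists h : aut X, (forall y, y \in F -> aut_fun h y = y) /\ aut_fun h x = x'.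
Proof.
move=> j_homo u_out; have [O O_u O_cut] := exists_nbhs_same_cut F j_homo u_out.
by exists O => // x x' Ox Ox'; apply: ultrahomogeneous_move; apply: O_cut.
Qed.

End UltrahomogeneousChain.

Section OrderTopologyCase.
Context {d : Order.disp_t} (X : orderType d).
Hypothesis X_uh : ultrahomogeneous X.
Hypothesis X_nontrivial : exists x y : X, x < y.
Local Notation TX := (order_topology X).
Local Notation L := (order_topology (mcomp X)).

Definition aut_mcomp_act (g : aut X) : L -> L := mcomp_map (svalP g).

Lemma exists_pt_strictly_between (a v : mcomp X) :
  a < v -> exists z, a < MPt z /\ MPt z < v.
Proof.
move=> av; have [p [ap pv]] := exists_pt_le_lt av.
move: ap; rewrite le_eqVlt => /predU1P[ap|]; last by exists p.
have [q [pq qv]] := exists_pt_lt_le pv.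
move: qv; rewrite le_eqVlt => /predU1P[qv|]; last by exists q; rewrite ap.
subst a v; rewrite ltPP in pq; have [r pr rq] := ultrahomogeneous_dense X_uh X_nontrivial pq.
by exists r; rewrite !ltPP.
Qed.

Lemma joint_nbhs_rray_order g k a : a < aut_mcomp_act g k ->
  joint_nbhs (@aut_fun _ X : aut X -> TX -> TX) aut_mcomp_act g k `]a, +oo[%classic.
Proof.
move=> /exists_pt_strictly_between [z [az zk]].
have [y gy] := aut_surj (svalP g) z.
have [p [ap pz]] := exists_pt_le_lt az; rewrite ltPP in pz.
exists [:: y], (fun=> `]p, +oo[%classic), `]MPt y, +oo[%classic; split.
- move=> x; rewrite inE => /eqP ->; split; first exact: rray_open.
  by rewrite /= in_itv /= andbT /aut_fun gy.
- exact: rray_open.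
- by rewrite /= in_itv /= andbT -(mcomp_map_lt_mono (svalP g)) /= gy.
- move=> h k' /(_ y (mem_head _ _)); rewrite /= !in_itv /= !andbT => phy yk'.
  apply: le_lt_trans ap (lt_trans (y := aut_mcomp_act h (MPt y)) _ _).
    by rewrite ltPP.
  by rewrite /aut_mcomp_act mcomp_map_lt_mono.
Qed.

Lemma joint_nbhs_lray_order g k b : aut_mcomp_act g k < b ->
  joint_nbhs (@aut_fun _ X : aut X -> TX -> TX) aut_mcomp_act g k `]-oo, b[%classic.
Proof.
move=> /exists_pt_strictly_between [z [kz zb]].
have [y gy] := aut_surj (svalP g) z.
have [p [zp pb]] := exists_pt_lt_le zb; rewrite ltPP in zp.
exists [:: y], (fun=> `]-oo, p[%classic), `]-oo, MPt y[%classic; split.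
- move=> x; rewrite inE => /eqP ->; split; first exact: lray_open.
  by rewrite /= in_itv /= /aut_fun gy.
- exact: lray_open.
- by rewrite /= in_itv /= -(mcomp_map_lt_mono (svalP g)) /= gy.
- move=> h k' /(_ y (mem_head _ _)); rewrite /= !in_itv /= => hyp k'y.
  apply: lt_le_trans (lt_trans (y := aut_mcomp_act h (MPt y)) _ _) pb.
    by rewrite /aut_mcomp_act mcomp_map_lt_mono.
  by rewrite ltPP.
Qed.

Theorem max_equiv_compactification_order_topology :
  max_equiv_compactification (@aut_fun _ X : aut X -> TX -> TX) (@MPt _ X : TX -> L).
Proof.
have [x0 _] := X_nontrivial.
apply: (max_equiv_compactification_homogeneous (dense_MPt x0) (e := aut_id X)) => //.
- split.
    by apply: (is_action_mcomp_map (fun g => svalP g : is_aut (aut_fun g))) => [g ->|f g h ->].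
  exact: pointwise_jcont_rays joint_nbhs_rray_order joint_nbhs_lray_order.
- exact: mcomp_compact.
- exact: order_hausdorff.
- exact: MPt_embedding.
- by move=> g x.
- move=> u u_out F; apply: (ultrahomogeneous_mcomp_nbhs X_uh (j := id)) => // x xu.
  by apply: u_out; exists x.
Qed.

End OrderTopologyCase.

Section DiscreteTopologyCase.
Context {d : Order.disp_t} (X : orderType d).
Local Notation Y := (lex3 X).

Lemma lt_lex3 (a b : X) (i j : 'I_3) :
  ((a, i) < (b, j) :> Y) = (a < b) || ((a == b) && (i < j)).
Proof. by rewrite ltEprodlexi /=; case: (ltgtP a b) => //= ->; rewrite lexx. Qed.

Definition mid3 : 'I_3 := Ordinal (isT : 1 < 3)%N.

Lemma ord3_cases (i : 'I_3) : [\/ i = ord0, i = mid3 | i = ord_max].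
Proof.
by case: i => [[|[|[|//]]] ?]; [constructor 1|constructor 2|constructor 3]; exact: val_inj.
Qed.

Definition lex3_map (g : aut X) (p : Y) : Y := (aut_fun g p.1, p.2).

Lemma is_aut_lex3_map (g : aut X) : is_aut (lex3_map g).
Proof.
have [[g' gK g'K] _] := svalP g; split.
  by exists (fun p : Y => (g' p.1, p.2)) => -[a i]; rewrite /lex3_map /aut_fun /= ?gK ?g'K.
move=> [a i] [b j]; rewrite /lex3_map /= !lt_lex3.
by rewrite (aut_lt_mono (svalP g)) (inj_eq (aut_inj (svalP g))).
Qed.

Hypothesis X_uh : ultrahomogeneous X.
Hypothesis X_nontrivial : exists x y : X, x < y.
Local Notation TX := (discrete_topology X).
Local Notation L := (order_topology (mcomp Y)).
Local Notation pt x i := (@MPt _ Y (x, i) : L).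

Definition lex3_mcomp_act (g : aut X) : L -> L := mcomp_map (is_aut_lex3_map g).

Lemma lbound_nbhs_lo_mid (x : X) (lo : set L) :
  lbound_nbhs (pt x ord0) lo -> exists2 r, r < x & lo (pt r mid3).
Proof.
case=> [->|[a ax ->]]; first by have [r rx] := ultrahomogeneous_nomin X_uh X_nontrivial x; exists r.
have [[w j] [aw wx]] := exists_pt_le_lt ax; move: wx; rewrite ltPP lt_lex3 andbF orbF.
move=> /(ultrahomogeneous_dense X_uh X_nontrivial) [r wr rx]; exists r => //.
by rewrite /= in_itv /= andbT (le_lt_trans aw) // ltPP lt_lex3 wr.
Qed.

Lemma ubound_nbhs_hi_mid (x : X) (hi : set L) :
  ubound_nbhs (pt x ord_max) hi -> exists2 r, x < r & hi (pt r mid3).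
Proof.
case=> [->|[b xb ->]]; first by have [r xr] := ultrahomogeneous_nomax X_uh X_nontrivial x; exists r.
have [[w j] [xw wb]] := exists_pt_lt_le xb; move: xw; rewrite ltPP lt_lex3.
have -> : (ord_max < j)%O = false by case: j {wb} => [[|[|[|]]]].
rewrite andbF orbF.
move=> /(ultrahomogeneous_dense X_uh X_nontrivial) [r xr rw]; exists r => //.
by rewrite /= in_itv /= (lt_le_trans _ wb) // ltPP lt_lex3 rw.
Qed.

Lemma bound_nbhs_meet_mid (x : X) (i : 'I_3) (lo hi : set L) :
  lbound_nbhs (pt x i) lo -> ubound_nbhs (pt x i) hi ->
  exists z, lo (pt z mid3) /\ hi (pt z mid3).
Proof.
case: (ord3_cases i) => -> x_lo x_hi.
- have [r rx lo_r] := lbound_nbhs_lo_mid x_lo; exists r; split => //.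
  case: x_hi => [->|[b xb ->]] //=; rewrite in_itv /=; apply: lt_trans xb.
  by rewrite ltPP lt_lex3 rx.
- exists x; split.
    by case: x_lo => [->|[a ax ->]] //=; rewrite in_itv /= andbT.
  by case: x_hi => [->|[b xb ->]] //=; rewrite in_itv /=.
- have [r xr hi_r] := ubound_nbhs_hi_mid x_hi; exists r; split => //.
  case: x_lo => [->|[a ax ->]] //=; rewrite in_itv /= andbT; apply: lt_trans ax _.
  by rewrite ltPP lt_lex3 xr.
Qed.

Lemma dense_lex3_mid : dense (range (fun x : TX => MPt (lex3_mid x) : L)).
Proof.
have [x0 _] := X_nontrivial.
move=> O [u Ou] oO.
have /nbhs_bound_rays [lo [hi [u_lo u_hi sub]]] := open_nbhs_nbhs (conj oO Ou).
have [[x i] [lo_xi hi_xi]] := bound_nbhs_meet_pts ((x0, ord0) : Y) u_lo u_hi.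
have xi_lo : lbound_nbhs (pt x i) lo.
  case: u_lo => [->|[a _ lo_a]]; [by left | right; exists a => //].
  by move: lo_xi; rewrite lo_a /= in_itv /= andbT.
have xi_hi : ubound_nbhs (pt x i) hi.
  case: u_hi => [->|[b _ hi_b]]; [by left | right; exists b => //].
  by move: hi_xi; rewrite hi_b /= in_itv.
have [z [lo_z hi_z]] := bound_nbhs_meet_mid xi_lo xi_hi.
by exists (pt z mid3); split; [exact: sub | exists z].
Qed.

(* [(x, -1) < (x, 0) < (x, 1)] isolates the image of [x]. *)
Lemma lex3_mid_embedding : topological_embedding (fun x : TX => MPt (lex3_mid x) : L).
Proof.
split=> [x y [] //|x W /= Wx|U _].
  apply: (@filterS _ (nbhs (x : TX)) _ [set x]); last exact: discrete_set1.
  by move=> _ ->; exact: nbhs_singleton Wx.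
exists (\bigcup_(x in U) `]pt x ord0, pt x ord_max[%classic).
  by apply: bigcup_open => x _; exact: itv_open.
apply/seteqP; split=> [y [x Ux]|y Uy]; last first.
  by exists y => //=; rewrite in_itv /= !ltPP !lt_lex3 eqxx /= !orbT.
rewrite /= in_itv /= !ltPP !lt_lex3 /=.
case/andP=> /orP[xy|/andP[/eqP <- _ _ //]] /orP[yx|/andP[/eqP -> _ //]].
by have := lt_trans xy yx; rewrite ltxx.
Qed.

Lemma joint_nbhs_rray_discrete g k a : a < lex3_mcomp_act g k ->
  joint_nbhs (@aut_fun _ X : aut X -> TX -> TX) lex3_mcomp_act g k `]a, +oo[%classic.
Proof.
move=> /exists_pt_le_lt [p [ap pk]].
have [q gq] := aut_surj (is_aut_lex3_map g) p.
exists [:: q.1], (fun x => [set aut_fun g x]), `]MPt q, +oo[%classic; split.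
- by move=> x _; split; [exact: discrete_open|].
- exact: rray_open.
- by rewrite /= in_itv /= andbT -(mcomp_map_lt_mono (is_aut_lex3_map g)) /= gq.
- move=> h k' /(_ q.1 (mem_head _ _)) hq; rewrite /= !in_itv /= !andbT => qk'.
  apply: le_lt_trans ap _; rewrite -gq /lex3_map -hq.
  by rewrite -[MPt _]/(lex3_mcomp_act h (MPt q)) mcomp_map_lt_mono.
Qed.

Lemma joint_nbhs_lray_discrete g k b : lex3_mcomp_act g k < b ->
  joint_nbhs (@aut_fun _ X : aut X -> TX -> TX) lex3_mcomp_act g k `]-oo, b[%classic.
Proof.
move=> /exists_pt_lt_le [p [kp pb]].
have [q gq] := aut_surj (is_aut_lex3_map g) p.
exists [:: q.1], (fun x => [set aut_fun g x]), `]-oo, MPt q[%classic; split.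
- by move=> x _; split; [exact: discrete_open|].
- exact: lray_open.
- by rewrite /= in_itv /= -(mcomp_map_lt_mono (is_aut_lex3_map g)) /= gq.
- move=> h k' /(_ q.1 (mem_head _ _)) hq; rewrite /= !in_itv /= => k'q.
  apply: lt_le_trans pb; rewrite -gq /lex3_map -hq.
  by rewrite -[MPt _]/(lex3_mcomp_act h (MPt q)) mcomp_map_lt_mono.
Qed.

Theorem max_equiv_compactification_discrete_topology :
  max_equiv_compactification (@aut_fun _ X : aut X -> TX -> TX)
    (fun x : TX => MPt (lex3_mid x) : L).
Proof.
apply: (max_equiv_compactification_homogeneous dense_lex3_mid (e := aut_id X)) => //.
- split.
    apply: (is_action_mcomp_map is_aut_lex3_map) => [g gid [y i]|f g h fgh [y i]];
    by rewrite /lex3_map /= ?gid ?fgh.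
  exact: pointwise_jcont_rays joint_nbhs_rray_discrete joint_nbhs_lray_discrete.
- exact: mcomp_compact.
- exact: order_hausdorff.
- exact: lex3_mid_embedding.
- by move=> g x.
- move=> u u_out F; apply: (ultrahomogeneous_mcomp_nbhs X_uh (j := @lex3_mid _ X)) => //.
    by move=> x y xy; rewrite lt_lex3 xy.
  by move=> x xu; apply: u_out; exists x.
Qed.

End DiscreteTopologyCase.

Unset Implicit Arguments.

Theorem lemma1p7 (d : Order.disp_t) (X : orderType d) :
  ultrahomogeneous X ->
  (exists x y : X, (x < y)%O) ->
  max_equiv_compactification (@aut_fun _ X : aut X -> order_topology X -> order_topology X)
    (@MPt _ X : order_topology X -> order_topology (mcomp X))
  /\
  max_equiv_compactification (@aut_fun _ X : aut X -> discrete_topology X -> discrete_topology X)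
    ((fun x => MPt (lex3_mid x)) : discrete_topology X -> order_topology (mcomp (lex3 X))).
Proof.
move=> X_uh X_nontrivial; split.
  exact: max_equiv_compactification_order_topology.
exact: max_equiv_compactification_discrete_topology.
Qed.
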